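(* Let $\varepsilon, D>0$. Let $(X_1,d_1)$ and $(X_2,d_2)$ be compact length spaces with closed measurement sets $S_1\subset X_1$ and $S_2\subset X_2$. Suppose that $\operatorname{diam}(X_1),\operatorname{diam}(X_2)<D$ and that both $(X_1,d_1)$ with $S_1$ and $(X_2,d_2)$ with $S_2$ are $\mathrm{BLIE}_\varepsilon$. If there is a homeomorphism $\phi\colon S_1\to S_2$, then \[ d_{GH}\big((X_1,d_1),(X_2,d_2)\big)\le \Big(\frac{2D}{\varepsilon}+1\Big)\, d^{H}_{C(S_1)}\big(\mathcal R_{X_1,S_1}(X_1),\mathcal R_{X_2,S_2,\phi}(X_2)\big). \] In particular, if the travel time data of $X_1$ and $X_2$ coincide, then $(X_1,d_1)$ and $(X_2,d_2)$ are isometric.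
   Context: A length space is a metric space $(X,d)$ in which $d(x,y)$ equals the infimum of the lengths $L(\gamma)=\sup\sum_i d(\gamma(t_{i-1}),\gamma(t_i))$ (supremum over partitions) of curves $\gamma$ from $x$ to $y$. For a compact length space $(X,d)$ and closed $S\subset X$, the travel time map is $\mathcal R_{X,S}\colon (X,d)\to (C(S),\|\cdot\|_\infty)$, $\mathcal R_{X,S}(p)=r_p$ with $r_p(z)=d(p,z)$ for $z\in S$; its image $\mathcal R_{X,S}(X)$ is the travel time data. A continuous map $f\colon (X,d_X)\to(Y,d_Y)$ is an $\varepsilon$-local isometry if $d_Y(f(p),f(q))=d_X(p,q)$ whenever $d_X(p,q)<\varepsilon$. $(X,d)$ with measurement set $S$ is $\mathrm{BLIE}_\varepsilon$ if $\mathcal R_{X,S}$ is a topological embedding and $\mathcal R_{X,S}^{-1}\colon(\mathcal R_{X,S}(X),\|\cdot\|_\infty)\to (X,d)$ is an $\varepsilon$-local isometry. For a homeomorphism $\phi\colon S_1\to S_2$, $\mathcal R_{X_2,S_2,\phi}(X_2):=\{d_2(q,\phi(\cdot))\colon S_1\to\mathbb R \mid q\in X_2\}\subset C(S_1)$. $d^H_{C(S_1)}$ is the Hausdorff distance in $(C(S_1),\|\cdot\|_\infty)$ and $d_{GH}$ the Gromov–Hausdorff distance. The travel time data of $X_1,X_2$ coincide if $d^H_{C(S_1)}(\mathcal R_{X_1,S_1}(X_1),\mathcal R_{X_2,S_2,\phi}(X_2))=0$ for some homeomorphism $\phi\colon S_1\to S_2$. *)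

From mathcomp Require Import all_boot all_order all_algebra.
From mathcomp Require Import boolp classical_sets reals constructive_ereal ereal.
Set Implicit Arguments. Unset Strict Implicit. Unset Printing Implicit Defensive.
Import Order.TTheory GRing.Theory Num.Theory.
Local Open Scope classical_set_scope.
Local Open Scope ring_scope.

Section MetricDefs.
Variable R : realType.

Definition is_metric (X : Type) (d : X -> X -> R) : Prop :=
  (forall x y, 0 <= d x y) /\ (forall x y, d x y = 0 <-> x = y) /\
  (forall x y, d x y = d y x) /\ (forall x y z, d x z <= d x y + d y z).

Definition mopen (X : Type) (d : X -> X -> R) (U : set X) : Prop :=
  forall x, U x -> exists r, 0 < r /\ forall y, d x y < r -> U y.

Definition mclosed (X : Type) (d : X -> X -> R) (S : set X) : Prop :=
  mopen d (~` S).

Definition mcompact (X : Type) (d : X -> X -> R) : Prop :=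
  forall (I : Type) (U : I -> set X), (forall i, mopen d (U i)) ->
    (forall x, exists i, U i x) ->
    exists (n : nat) (f : nat -> I), forall x, exists k, (k < n)%N /\ U (f k) x.

Definition diam (X : Type) (d : X -> X -> R) : \bar R :=
  ereal_sup [set (d x y)%:E | x in setT & y in setT].

Definition curve_continuous (X : Type) (d : X -> X -> R) (g : R -> X) : Prop :=
  forall t, 0 <= t <= 1 -> forall e, 0 < e -> exists delta, 0 < delta /\
    forall s, 0 <= s <= 1 -> `|s - t| < delta -> d (g t) (g s) < e.

Fixpoint partition_sum (X : Type) (d : X -> X -> R) (g : R -> X) (t0 : R)
    (ts : seq R) : R :=
  match ts with
  | [::] => 0
  | t :: ts' => d (g t0) (g t) + partition_sum d g t ts'
  end.

(* 0 = t_0 <= t_1 <= ... <= t_n = 1 is encoded as ts = [:: t_1; ...; t_n] *)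
Definition is_partition (ts : seq R) : Prop :=
  path (fun a b : R => a <= b) 0 ts /\ last 0 ts = 1.

Definition curve_length (X : Type) (d : X -> X -> R) (g : R -> X) : \bar R :=
  ereal_sup [set (partition_sum d g 0 ts)%:E | ts in is_partition].

Definition length_space (X : Type) (d : X -> X -> R) : Prop :=
  is_metric d /\
  forall x y, (d x y)%:E =
    ereal_inf [set curve_length d g | g in
                 [set g | curve_continuous d g /\ g 0 = x /\ g 1 = y]].

(* sup-norm distance in C(S) between f, g (functions restricted to S);
   0 is included so that C(empty) gets distance 0 *)
Definition supdist (A : Type) (S : set A) (f g : A -> R) : \bar R :=
  ereal_sup ([set (`|f z - g z|)%:E | z in S] `|` [set 0%E]).

Definition hausdorff (T : Type) (dT : T -> T -> \bar R) (A B : set T) : \bar R :=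
  maxe (ereal_sup [set ereal_inf [set dT a b | b in B] | a in A])
       (ereal_sup [set ereal_inf [set dT a b | a in A] | b in B]).

(* travel time map R_{X,S}(p) = r_p = d(p, .) restricted to S, and its image *)
Definition travel_time (X : Type) (d : X -> X -> R) (p : X) : X -> R :=
  fun z => d p z.

Definition travel_time_data (X : Type) (d : X -> X -> R) : set (X -> R) :=
  [set travel_time d p | p in setT].

Definition travel_time_data_phi (X1 X2 : Type) (d2 : X2 -> X2 -> R)
    (phi : X1 -> X2) : set (X1 -> R) :=
  [set (fun z => d2 q (phi z)) | q in setT].

Definition tt_embedding (X : Type) (d : X -> X -> R) (S : set X) : Prop :=
  (forall p q, supdist S (travel_time d p) (travel_time d q) = 0%E -> p = q) /\
  (forall p e, 0 < e -> exists delta, 0 < delta /\ forall q,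
      d p q < delta -> (supdist S (travel_time d p) (travel_time d q) < e%:E)%E) /\
  (forall p e, 0 < e -> exists delta, 0 < delta /\ forall q,
      (supdist S (travel_time d p) (travel_time d q) < delta%:E)%E -> d p q < e).

Definition BLIE (X : Type) (d : X -> X -> R) (S : set X) (eps : R) : Prop :=
  tt_embedding d S /\
  forall p q, (supdist S (travel_time d p) (travel_time d q) < eps%:E)%E ->
    (d p q)%:E = supdist S (travel_time d p) (travel_time d q).

Definition cont_on (X Y : Type) (dX : X -> X -> R) (dY : Y -> Y -> R)
    (A : set X) (f : X -> Y) : Prop :=
  forall x, A x -> forall e, 0 < e -> exists delta, 0 < delta /\
    forall y, A y -> dX x y < delta -> dY (f x) (f y) < e.

Definition homeo_on (X1 X2 : Type) (d1 : X1 -> X1 -> R) (d2 : X2 -> X2 -> R)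
    (S1 : set X1) (S2 : set X2) (phi : X1 -> X2) : Prop :=
  exists psi : X2 -> X1,
    (forall x, S1 x -> S2 (phi x)) /\ (forall y, S2 y -> S1 (psi y)) /\
    (forall x, S1 x -> psi (phi x) = x) /\ (forall y, S2 y -> phi (psi y) = y) /\
    cont_on d1 d2 S1 phi /\ cont_on d2 d1 S2 psi.

Definition isom_embedding (X Z : Type) (dX : X -> X -> R) (dZ : Z -> Z -> R)
    (f : X -> Z) : Prop :=
  forall x y, dZ (f x) (f y) = dX x y.

Definition GH_dist (X1 X2 : Type) (d1 : X1 -> X1 -> R) (d2 : X2 -> X2 -> R)
    : \bar R :=
  ereal_inf [set r | exists (Z : Type) (dZ : Z -> Z -> R) (f1 : X1 -> Z)
      (f2 : X2 -> Z), is_metric dZ /\ isom_embedding d1 dZ f1 /\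
      isom_embedding d2 dZ f2 /\
      r = hausdorff (fun a b => (dZ a b)%:E) (range f1) (range f2)].

Definition isometric (X1 X2 : Type) (d1 : X1 -> X1 -> R) (d2 : X2 -> X2 -> R)
    : Prop :=
  exists f : X1 -> X2, bijective f /\ forall x y, d2 (f x) (f y) = d1 x y.

End MetricDefs.

(* If the travel-time data are h-close in the Hausdorff distance of C(S1),
   relating p in X1 to q in X2 whenever r_p and r_q o phi are h-close gives a
   correspondence.  By the BLIE property it distorts distances below
   eps - 2h by at most 2h, and since X1, X2 are length spaces of diameter < D,
   chaining n <= 2D/eps + 1 such steps bounds its distortion by 2nh, hence
   d_GH <= nh.  For large h the trivial correspondence already gives
   d_GH <= D/2.  If the Hausdorff distance vanishes, compactness makes the
   0-close relation a correspondence; it has distortion 0, so it is an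
   isometry. *)

From mathcomp Require Import all_boot all_order all_algebra.
From mathcomp Require Import boolp classical_sets reals constructive_ereal ereal.
From mathcomp Require Import topology normedtype.
From mathcomp Require Import ring lra.
Import Order.TTheory GRing.Theory Num.Theory.
Import numFieldNormedType.Exports.
Set Implicit Arguments. Unset Strict Implicit. Unset Printing Implicit Defensive.
Local Open Scope classical_set_scope.
Local Open Scope ring_scope.

Section MetricFacts.
Variables (R : realType) (X : Type) (d : X -> X -> R).
Hypothesis md : is_metric d.

Lemma metric_ge0 x y : 0 <= d x y.
Proof. by case: md. Qed.

Lemma metric_xx x : d x x = 0.
Proof. by case: md => _ [/(_ x x) [_ ->]]. Qed.

Lemma metric_eq0 x y : d x y = 0 -> x = y.
Proof. by case: md => _ [/(_ x y) [+ _]]. Qed.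

Lemma metricC x y : d x y = d y x.
Proof. by case: md => _ [_ []]. Qed.

Lemma metric_triangle x y z : d x z <= d x y + d y z.
Proof. by case: md => _ [_ [_]]. Qed.

Lemma metric_dist_sub x y z : `|d x y - d x z| <= d y z.
Proof.
have := metric_triangle x y z; have := metric_triangle x z y.
by rewrite (metricC z y) ler_norml => ? ?; apply/andP; split; lra.
Qed.

Lemma lt_diam D : (diam d < D%:E)%E -> forall x y, d x y < D.
Proof.
move=> dD x y; rewrite -lte_fin; apply: le_lt_trans dD.
by apply: ereal_sup_ubound; exists x => //; exists y.
Qed.

End MetricFacts.

Section SupDist.
Variables (R : realType) (A : Type) (S : set A).
Implicit Types f g h : A -> R.

Lemma supdist_ge0 f g : (0 <= supdist S f g)%E.
Proof. by apply: ereal_sup_ubound; right. Qed.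

Lemma supdist_ub f g z : S z -> ((`|f z - g z|)%:E <= supdist S f g)%E.
Proof. by move=> Sz; apply: ereal_sup_ubound; left; exists z. Qed.

Lemma ge_supdist f g (c : \bar R) :
  (0 <= c)%E -> (forall z, S z -> ((`|f z - g z|)%:E <= c)%E) ->
  (supdist S f g <= c)%E.
Proof. by move=> c0 fgc; apply: ge_ereal_sup => _ [[z Sz <-]|->] //; exact: fgc. Qed.

Lemma supdistC f g : supdist S f g = supdist S g f.
Proof.
by congr ereal_sup; apply/seteqP; split => _ [[z Sz <-]|->];
  do ?[by right]; left; exists z => //; rewrite distrC.
Qed.

Lemma supdist_triangle f g h :
  (supdist S f h <= supdist S f g + supdist S g h)%E.
Proof.
apply: ge_supdist => [|z Sz]; first by rewrite adde_ge0 ?supdist_ge0.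
apply: le_trans (leeD (supdist_ub f g Sz) (supdist_ub g h Sz)).
by rewrite -EFinD lee_fin -(subrKA (g z)) ler_normD.
Qed.

Lemma supdist_comp (B : Type) (T : set B) (phi : B -> A) f g :
  phi @` T = S -> supdist T (f \o phi) (g \o phi) = supdist S f g.
Proof.
by move=> <-; congr ereal_sup; congr setU; rewrite image_comp.
Qed.

End SupDist.

Lemma supdist_travel_time (R : realType) (X : Type) (d : X -> X -> R)
  (S : set X) p q :
  is_metric d -> (supdist S (travel_time d p) (travel_time d q) <= (d p q)%:E)%E.
Proof.
move=> md; apply: ge_supdist => [|z _]; first by rewrite lee_fin metric_ge0.
by rewrite lee_fin /travel_time !(metricC md _ z) metric_dist_sub.
Qed.

Lemma local_distortion_bound (R : realType) (A X Y : Type) (S : set A)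
    (E1 : X -> A -> R) (d1 : X -> X -> R) (E2 : Y -> A -> R) (d2 : Y -> Y -> R)
    (eps h : R) x x' y y' :
  (forall a b, (supdist S (E1 a) (E1 b) <= (d1 a b)%:E)%E) ->
  (forall a b, (supdist S (E2 a) (E2 b) < eps%:E)%E ->
     (d2 a b)%:E = supdist S (E2 a) (E2 b)) ->
  (supdist S (E1 x) (E2 y) <= h%:E)%E -> (supdist S (E1 x') (E2 y') <= h%:E)%E ->
  d1 x x' < eps - 2 * h -> d2 y y' <= d1 x x' + 2 * h.
Proof.
move=> E1_lip E2_isom xy x'y' dxx'.
have h0 : 0 <= h by rewrite -lee_fin (le_trans (supdist_ge0 _ _ _) xy).
have yy' : (supdist S (E2 y) (E2 y') <= (d1 x x' + 2 * h)%:E)%E.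
  apply: le_trans (supdist_triangle _ _ (E1 x) _) _.
  rewrite supdistC.
  have -> : d1 x x' + 2 * h = h + (d1 x x' + h) by ring.
  rewrite EFinD; apply: leeD => //; rewrite EFinD.
  apply: le_trans (supdist_triangle _ _ (E1 x') _) _.
  exact: leeD.
rewrite -lee_fin E2_isom //; apply: le_lt_trans yy' _; rewrite lte_fin; lra.
Qed.

Section Hausdorff.
Variables (R : realType) (T : Type) (dT : T -> T -> \bar R) (A B : set T).

Lemma hausdorff_ge0 :
  (forall a b, 0 <= dT a b)%E -> A !=set0 -> (0 <= hausdorff dT A B)%E.
Proof.
move=> dT0 [a Aa]; rewrite le_max; apply/orP; left.
apply: le_trans (ereal_sup_ubound _) => /=; last by exists a.
by apply: le_ereal_inf_tmp => _ [b _ <-].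
Qed.

Lemma hausdorff_lt (r : \bar R) : (hausdorff dT A B < r)%E ->
  (forall a, A a -> exists2 b, B b & (dT a b < r)%E) /\
  (forall b, B b -> exists2 a, A a & (dT a b < r)%E).
Proof.
move=> Hr; split=> [a Aa|b Bb].
- have /ereal_inf_lt[_ [b Bb <-]] : (ereal_inf [set dT a b | b in B] < r)%E.
    apply: le_lt_trans Hr; rewrite le_max; apply/orP; left.
    by apply: ereal_sup_ubound; exists a.
  by exists b.
- have /ereal_inf_lt[_ [a Aa <-]] : (ereal_inf [set dT a b | a in A] < r)%E.
    apply: le_lt_trans Hr; rewrite le_max; apply/orP; right.
    by apply: ereal_sup_ubound; exists b.
  by exists a.
Qed.

End Hausdorff.

Lemma le_mule_of_gt (R : realType) (c : R) (x y : \bar R) :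
  0 < c -> (0 <= y)%E -> (forall h, (y < h%:E)%E -> (x <= (c * h)%:E)%E) ->
  (x <= c%:E * y)%E.
Proof.
move=> c0; case: y => [r _|_|//] xle; last first.
  by rewrite mulry gtr0_sg // mul1e leey.
apply/lee_addgt0Pr => e e0; rewrite -EFinM -EFinD.
have -> : c * r + e = c * (r + e / c) by rewrite mulrDr mulrCA divff ?mulr1 ?gt_eqF.
by apply: xle; rewrite lte_fin ltrDl divr_gt0.
Qed.

Section LengthSpace.
Variables (R : realType) (X : Type) (d : X -> X -> R).
Hypothesis Ld : length_space d.

Let md : is_metric d := proj1 Ld.

Lemma curve_dist_continuous x (g : R -> X) :
  curve_continuous d g -> {within `[0, 1], continuous (fun t => d x (g t))}.
Proof.
move=> gc; apply/subspace_continuousP => t t01; apply/cvgrPdist_lt => e e0.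
have [|del [del0 gdel]] := gc t _ e e0; first by move: t01; rewrite /= in_itv.
apply/nbhs_ballP; exists del => // s /= ts s01.
apply: le_lt_trans (metric_dist_sub md _ _ _) (gdel _ _ _).
  by move: s01; rewrite /= in_itv.
by move: ts; rewrite /ball /= distrC.
Qed.

Lemma length_space_split x x' a e : 0 <= a <= d x x' -> 0 < e ->
  exists z, d x z = a /\ d z x' < d x x' - a + e.
Proof.
move=> /andP[a0 ad] e0.
have : (ereal_inf [set curve_length d g | g in
          [set g | curve_continuous d g /\ g 0%R = x /\ g 1%R = x']]
        < (d x x' + e)%:E)%E by rewrite -(Ld.2 x x') lte_fin ltrDl.
move=> /ereal_inf_lt[_ [g [gc [g0 g1]] <-]] Lg.
have [t t01 gt] : exists2 t, t \in `[0, 1] & d x (g t) = a.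
  apply: IVT => //; first exact: curve_dist_continuous.
  by rewrite g0 g1 metric_xx // ge_min le_max a0 ad orbT.
exists (g t); split => //.
have part : ((partition_sum d g 0 [:: t; 1])%:E <= curve_length d g)%E.
  apply: ereal_sup_ubound; exists [:: t; 1] => //; split => //=.
  by move: t01; rewrite in_itv /= => /andP[-> ->].
have := le_lt_trans part Lg; rewrite lte_fin /= g0 g1 gt addr0; lra.
Qed.

(* Induction on [n]: a near-geodesic from [x] to [x'] passes through a point
   [z] with [d x z < rho] and [d z x' < n * rho]. *)
Lemma length_space_chain (Y : Type) (dY : Y -> Y -> R) (C : X -> Y -> Prop)
    (rho k : R) :
  (forall a b c, dY a c <= dY a b + dY b c) -> (forall x, exists y, C x y) ->
  0 < rho -> 0 <= k ->
  (forall x x' y y', C x y -> C x' y' -> d x x' < rho ->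
     dY y y' <= d x x' + k) ->
  forall n x x' y y', C x y -> C x' y' -> d x x' < n%:R * rho ->
    dY y y' <= d x x' + n%:R * k.
Proof.
move=> dY_tri Ctot rho0 k0 local; elim=> [|n IHn] x x' y y' Cxy Cxy'.
  by rewrite mul0r ltNge metric_ge0.
rewrite -natr1 mulrDl mul1r => dn.
have nk0 : 0 <= n%:R * k by rewrite mulr_ge0.
have [dlt|dge] := ltP (d x x') rho.
  by apply: le_trans (local _ _ _ _ Cxy Cxy' dlt) _; lra.
set m := Num.max 0 (d x x' - n%:R * rho).
have [m0 m_ge] : 0 <= m /\ d x x' - n%:R * rho <= m by rewrite !le_max !lexx orbT.
have m_lt : m < rho by rewrite gt_max rho0 /=; lra.
set a := (m + rho) / 2.
apply/ler_addgt0Pr => eta eta0.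
set e := Num.min eta (n%:R * rho - (d x x' - a)).
have [e_le e_le'] : e <= eta /\ e <= n%:R * rho - (d x x' - a).
  by rewrite !ge_min !lexx orbT.
have e0 : 0 < e by rewrite lt_min eta0 /= /a; lra.
have [|z [dxz dzx']] := @length_space_split x x' a e _ e0.
  by rewrite /a; apply/andP; split; lra.
have [w Czw] := Ctot z.
have dyw : dY y w <= a + k by rewrite -dxz; apply: local; rewrite // dxz /a; lra.
have dwy' : dY w y' <= d z x' + n%:R * k.
  by apply: IHn => //; rewrite /e /a in e_le' dzx' *; lra.
by apply: le_trans (dY_tri _ w _) _; lra.
Qed.

End LengthSpace.

Definition correspondence (X1 X2 : Type) (C : X1 -> X2 -> Prop) : Prop :=
  (forall x, exists y, C x y) /\ (forall y, exists x, C x y).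

Definition distortion_le (R : realType) (X1 X2 : Type) (d1 : X1 -> X1 -> R)
    (d2 : X2 -> X2 -> R) (C : X1 -> X2 -> Prop) (B : R) : Prop :=
  forall p q p' q', C p q -> C p' q' -> `|d1 p p' - d2 q q'| <= B.

Section Gluing.
Variables (R : realType) (X1 X2 : Type) (d1 : X1 -> X1 -> R) (d2 : X2 -> X2 -> R).
Variables (C : X1 -> X2 -> Prop) (B : R).
Hypotheses (m1 : is_metric d1) (m2 : is_metric d2) (corrC : correspondence C).
Hypotheses (B0 : 0 < B) (disC : distortion_le d1 d2 C B).

Definition glue_gap (x : X1) (y : X2) : R :=
  inf [set r | exists p q, C p q /\ r = d1 x p + d2 q y].

(* The offset [B / 2] pays for the distortion of [C] in the triangle
   inequality. *)
Definition glue_dist (a b : X1 + X2) : R :=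
  match a, b with
  | inl x, inl x' => d1 x x'
  | inr y, inr y' => d2 y y'
  | inl x, inr y | inr y, inl x => glue_gap x y + B / 2
  end.

Lemma glue_gap_le x y p q : C p q -> glue_gap x y <= d1 x p + d2 q y.
Proof.
move=> Cpq; apply: ge_inf; last by exists p, q.
by exists 0 => _ [p' [q' [_ ->]]]; rewrite addr_ge0 ?metric_ge0.
Qed.

Lemma le_glue_gap x y c :
  (forall p q, C p q -> c <= d1 x p + d2 q y) -> c <= glue_gap x y.
Proof.
move=> cle; apply: lb_le_inf => [|_ [p [q [Cpq ->]]]]; last exact: cle.
by have [q Cxq] := corrC.1 x; exists (d1 x x + d2 q y), x, q.
Qed.

Lemma glue_gap_ge0 x y : 0 <= glue_gap x y.
Proof. by apply: le_glue_gap => p q _; rewrite addr_ge0 ?metric_ge0. Qed.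

Lemma glue_gap_lipl x x' y : glue_gap x y <= d1 x x' + glue_gap x' y.
Proof.
suff : glue_gap x y - d1 x x' <= glue_gap x' y by lra.
apply: le_glue_gap => p q Cpq.
have := glue_gap_le x y Cpq; have := metric_triangle m1 x x' p; lra.
Qed.

Lemma glue_gap_lipr x y y' : glue_gap x y <= glue_gap x y' + d2 y' y.
Proof.
suff : glue_gap x y - d2 y' y <= glue_gap x y' by lra.
apply: le_glue_gap => p q Cpq.
have := glue_gap_le x y Cpq; have := metric_triangle m2 q y' y; lra.
Qed.

Lemma glue_gap_triangle1 x x' y : d1 x x' <= glue_gap x y + glue_gap x' y + B.
Proof.
suff : d1 x x' - B - glue_gap x' y <= glue_gap x y by lra.
apply: le_glue_gap => p q Cpq.
suff : d1 x x' - B - d1 x p - d2 q y <= glue_gap x' y by lra.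
apply: le_glue_gap => p' q' Cpq'.
have /ler_normlP[_ dis] := disC Cpq Cpq'.
have := metric_triangle m1 x p x'; have := metric_triangle m1 p p' x'.
have := metric_triangle m2 q y q'; rewrite (metricC m1 p' x') (metricC m2 y q').
lra.
Qed.

Lemma glue_gap_triangle2 x y y' : d2 y y' <= glue_gap x y + glue_gap x y' + B.
Proof.
suff : d2 y y' - B - glue_gap x y' <= glue_gap x y by lra.
apply: le_glue_gap => p q Cpq.
suff : d2 y y' - B - d1 x p - d2 q y <= glue_gap x y' by lra.
apply: le_glue_gap => p' q' Cpq'.
have /ler_normlP[dis _] := disC Cpq Cpq'.
have := metric_triangle m2 y q y'; have := metric_triangle m2 q q' y'.
have := metric_triangle m1 p x p'; rewrite (metricC m1 p x) (metricC m2 y q).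
lra.
Qed.

Lemma glue_dist_metric : is_metric glue_dist.
Proof.
have gap0 := glue_gap_ge0.
split; [|split; [|split]].
- have B2 : 0 <= B / 2 by rewrite divr_ge0 ?ltW.
  by case=> [x|y] [x'|y'] /=; rewrite ?addr_ge0 ?(metric_ge0 m1) ?(metric_ge0 m2).
- case=> [x|y] [x'|y'] /=.
  + by split=> [/(metric_eq0 m1) -> //|[->]]; rewrite metric_xx.
  + by split=> [gap|//]; exfalso; have := gap0 x y'; have := B0; lra.
  + by split=> [gap|//]; exfalso; have := gap0 x' y; have := B0; lra.
  + by split=> [/(metric_eq0 m2) -> //|[->]]; rewrite metric_xx.
- by case=> [x|y] [x'|y'] //=; [exact: metricC | exact: metricC].
- case=> [x|y] [x'|y'] [x''|y''] /=.
  + exact: metric_triangle.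
  + by have := glue_gap_lipl x x' y''; lra.
  + by have := glue_gap_triangle1 x x'' y'; lra.
  + by have := glue_gap_lipr x y'' y'; lra.
  + by have := glue_gap_lipl x'' x' y; rewrite (metricC m1 x'' x'); lra.
  + by have := glue_gap_triangle2 x' y y''; lra.
  + by have := glue_gap_lipr x'' y y'; rewrite (metricC m2 y' y); lra.
  + exact: metric_triangle.
Qed.

Lemma GH_dist_le_glue : (GH_dist d1 d2 <= (B / 2)%:E)%E.
Proof.
apply: ge_ereal_inf.
exists (hausdorff (fun a b => (glue_dist a b)%:E) (range inl) (range inr)).
  by exists (X1 + X2)%type, glue_dist, inl, inr; split=> //; exact: glue_dist_metric.
have gap_le p q : C p q -> glue_gap p q <= 0.
  move=> Cpq; have := glue_gap_le p q Cpq.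
  by rewrite (metric_xx m1) (metric_xx m2) addr0.
rewrite ge_max; apply/andP; split; apply: ge_ereal_sup.
- move=> _ [_ [x _ <-] <-]; have [q Cxq] := corrC.1 x.
  apply: ge_ereal_inf; exists (glue_dist (inl x) (inr q))%:E.
    by exists (inr q) => //; exists q.
  by rewrite lee_fin /=; have := gap_le _ _ Cxq; lra.
- move=> _ [_ [y _ <-] <-]; have [p Cpy] := corrC.2 y.
  apply: ge_ereal_inf; exists (glue_dist (inl p) (inr y))%:E.
    by exists (inl p) => //; exists p.
  by rewrite lee_fin /=; have := gap_le _ _ Cpy; lra.
Qed.

End Gluing.

Lemma GH_dist_le_distortion (R : realType) (X1 X2 : Type) (d1 : X1 -> X1 -> R)
    (d2 : X2 -> X2 -> R) (C : X1 -> X2 -> Prop) (B : R) :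
  is_metric d1 -> is_metric d2 -> correspondence C -> 0 <= B ->
  distortion_le d1 d2 C B -> (GH_dist d1 d2 <= (B / 2)%:E)%E.
Proof.
move=> m1 m2 corrC B0 disC; apply/lee_addgt0Pr => e e0.
apply: le_trans (@GH_dist_le_glue _ _ _ d1 d2 C (B + 2 * e) m1 m2 corrC _ _) _.
- lra.
- by move=> p q p' q' Cpq Cpq'; apply: le_trans (disC _ _ _ _ Cpq Cpq') _; lra.
- by rewrite -EFinD lee_fin; lra.
Qed.

Lemma isometric_of_distortion0 (R : realType) (X1 X2 : Type)
    (d1 : X1 -> X1 -> R) (d2 : X2 -> X2 -> R) (C : X1 -> X2 -> Prop) :
  is_metric d1 -> is_metric d2 -> correspondence C -> distortion_le d1 d2 C 0 ->
  isometric d1 d2.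
Proof.
move=> m1 m2 [CX1 CX2] disC.
have dis0 p q p' q' : C p q -> C p' q' -> d2 q q' = d1 p p'.
  by move=> Cpq Cpq'; apply/eqP; rewrite eq_sym -subr_eq0 -normr_le0 disC.
pose f p := sval (cid (CX1 p)); pose g q := sval (cid (CX2 q)).
have Cf p : C p (f p) := svalP (cid (CX1 p)).
have Cg q : C (g q) q := svalP (cid (CX2 q)).
exists f; split => [|p p']; last exact: dis0.
exists g => [p|q].
- by apply: (metric_eq0 m1); rewrite -(dis0 _ _ _ _ (Cg (f p)) (Cf p)) metric_xx.
- by apply: (metric_eq0 m2); rewrite (dis0 _ _ _ _ (Cf (g q)) (Cg q)) metric_xx.
Qed.

Lemma mcompact_lipschitz_zero (R : realType) (X : Type) (d : X -> X -> R)
    (F : X -> R) :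
  mcompact d -> (forall x y, F x <= F y + d x y) ->
  (forall r, 0 < r -> exists x, F x < r) -> (forall x, 0 <= F x) ->
  exists x, F x = 0.
Proof.
move=> cptd Flip Fapprox F0; apply: contrapT => /forallNP Fneq0.
pose U k := [set x | k.+1%:R^-1 < F x].
have Uopen k : mopen d (U k).
  move=> x; rewrite /U /=; set r := k.+1%:R^-1 => Ux.
  exists (F x - r); split=> [|y dxy]; first by rewrite subr_gt0.
  by have := Flip x y; lra.
have Ucover x : exists k, U k x.
  have Fx0 : 0 < F x by rewrite lt_def F0 andbT; apply/eqP/Fneq0.
  by have [k] := ltr_add_invr Fx0; rewrite add0r; exists k.
have [n [f Uf]] := cptd nat U Uopen Ucover.
set N := \max_(k < n) f k.
have [x Fx] := Fapprox N.+1%:R^-1 ltac:(by rewrite invr_gt0).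
have [k [kn Ukx]] := Uf x.
have fkN : (f k <= N)%N := @leq_bigmax _ (fun i : 'I_n => f i) (Ordinal kn).
have : N.+1%:R^-1 <= (f k).+1%:R^-1 :> R by rewrite lef_pV2 ?posrE ?ler_nat.
move: Ukx Fx; rewrite /U /=; set r := N.+1%:R^-1; set r' := (f k).+1%:R^-1.
lra.
Qed.

Lemma mcompact_lipschitz_zeroE (R : realType) (X : Type) (d : X -> X -> R)
    (G : X -> \bar R) :
  mcompact d -> (forall x, G x \is a fin_num) ->
  (forall x y, G x <= G y + (d x y)%:E)%E ->
  (forall r, 0 < r -> exists x, (G x < r%:E)%E) -> (forall x, 0 <= G x)%E ->
  exists x, G x = 0%E.
Proof.
move=> cptd Gfin Glip Gapprox G0.
have GE x : G x = (fine (G x))%:E by rewrite fineK.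
have [x Gx0] : exists x, fine (G x) = 0.
  apply: (mcompact_lipschitz_zero cptd) => [x y|r r0|x].
  - by rewrite -lee_fin EFinD -!GE.
  - by have [x Gx] := Gapprox r r0; exists x; rewrite -lte_fin -GE.
  - by rewrite -lee_fin -GE.
by exists x; rewrite GE Gx0.
Qed.

Lemma exists_nat_mul_ge (R : realType) (a b : R) : 0 <= a -> 0 < b ->
  exists n : nat, a <= n%:R * b /\ n%:R <= a / b + 1.
Proof.
move=> a0 b0; have /andP[len ltn] := truncn_itv (divr_ge0 a0 (ltW b0)).
exists (Num.trunc (a / b)).+1; split; last by rewrite -natr1 lerD2r.
by rewrite -ler_pdivrMr // ltW.
Qed.

Lemma homeo_on_image (R : realType) (X1 X2 : Type) (d1 : X1 -> X1 -> R)
    (d2 : X2 -> X2 -> R) (S1 : set X1) (S2 : set X2) (phi : X1 -> X2) :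
  homeo_on d1 d2 S1 S2 phi -> phi @` S1 = S2.
Proof.
move=> [psi [phiS [psiS [_ [phiK _]]]]].
apply/seteqP; split=> [_ [x S1x <-]|y S2y]; first exact: phiS.
by exists (psi y); [exact: psiS | exact: phiK].
Qed.

Section TravelTimeCorrespondence.
Variables (R : realType) (eps D : R).
Variables (X1 : Type) (d1 : X1 -> X1 -> R) (S1 : set X1).
Variables (X2 : Type) (d2 : X2 -> X2 -> R) (S2 : set X2) (phi : X1 -> X2).
Hypotheses (L1 : length_space d1) (L2 : length_space d2).
Hypotheses (D1 : forall x y, d1 x y < D) (D2 : forall x y, d2 x y < D).
Hypotheses (B1 : BLIE d1 S1 eps) (B2 : BLIE d2 S2 eps).
Hypotheses (eps0 : 0 < eps) (D0 : 0 < D) (phiS : phi @` S1 = S2).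

Let m1 : is_metric d1 := proj1 L1.
Let m2 : is_metric d2 := proj1 L2.

Let H := hausdorff (supdist S1) (travel_time_data d1) (travel_time_data_phi d2 phi).

Definition tt_close (h : R) (p : X1) (q : X2) : Prop :=
  (supdist S1 (travel_time d1 p) (travel_time d2 q \o phi) <= h%:E)%E.

Lemma supdist_tt_phi q q' :
  supdist S1 (travel_time d2 q \o phi) (travel_time d2 q' \o phi) =
  supdist S2 (travel_time d2 q) (travel_time d2 q').
Proof. exact: supdist_comp. Qed.

Lemma tt_close_local12 h x x' y y' : tt_close h x y -> tt_close h x' y' ->
  d1 x x' < eps - 2 * h -> d2 y y' <= d1 x x' + 2 * h.
Proof.
apply: (@local_distortion_bound _ _ _ _ _ (travel_time d1) _
          (fun q => travel_time d2 q \o phi)) => a b.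
- exact: supdist_travel_time.
- by rewrite !supdist_tt_phi; exact: B2.2.
Qed.

Lemma tt_close_local21 h x x' y y' : tt_close h x y -> tt_close h x' y' ->
  d2 y y' < eps - 2 * h -> d1 x x' <= d2 y y' + 2 * h.
Proof.
rewrite /tt_close supdistC => xy; rewrite supdistC; move: xy.
apply: (@local_distortion_bound _ _ _ _ _ (fun q => travel_time d2 q \o phi) _
          (travel_time d1)) => a b.
- by rewrite supdist_tt_phi; exact: supdist_travel_time.
- exact: B1.2.
Qed.

Lemma tt_close_distortion h n : 0 <= h -> 4 * h < eps ->
  D <= n%:R * (eps / 2) -> correspondence (tt_close h) ->
  distortion_le d1 d2 (tt_close h) (n%:R * (2 * h)).
Proof.
move=> h0 h4 nD [C1 C2] p q p' q' Cpq Cpq'.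
have rho0 : 0 < eps - 2 * h by lra.
have nrho : D <= n%:R * (eps - 2 * h).
  by apply: le_trans nD (ler_wpM2l (ler0n _ _) _); lra.
have k0 : 0 <= 2 * h by lra.
rewrite ler_norml; apply/andP; split.
- have := length_space_chain L1 (metric_triangle m2) C1 rho0 k0
    (@tt_close_local12 h) Cpq Cpq' (lt_le_trans (D1 p p') nrho).
  lra.
- have := length_space_chain L2 (metric_triangle m1) C2 rho0 k0
    (fun y y' x x' Cxy Cxy' => @tt_close_local21 h x x' y y' Cxy Cxy')
    Cpq Cpq' (lt_le_trans (D2 q q') nrho).
  lra.
Qed.

Lemma tt_close_corr_of_hausdorff_lt h : (H < h%:E)%E -> correspondence (tt_close h).
Proof.
move=> /hausdorff_lt[Hp Hq]; split=> [p|q].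
- have [|_ [q _ <-] lt] := Hp (travel_time d1 p); first by exists p.
  by exists q; apply: ltW.
- have [|_ [p _ <-] lt] := Hq (travel_time d2 q \o phi); first by exists q.
  by exists p; apply: ltW.
Qed.

Lemma supdist_tt_fin_num p q :
  supdist S1 (travel_time d1 p) (travel_time d2 q \o phi) \is a fin_num.
Proof.
have tt_le_D : (supdist S1 (travel_time d1 p) (travel_time d2 q \o phi) <= D%:E)%E.
  apply: ge_supdist => [|z _]; first by rewrite lee_fin ltW.
  rewrite lee_fin /travel_time /= ler_norml.
  have := D1 p z; have := D2 q (phi z); have := metric_ge0 m1 p z.
  by have := metric_ge0 m2 q (phi z); move=> *; apply/andP; split; lra.
by rewrite ge0_fin_numE ?supdist_ge0 // (le_lt_trans tt_le_D) ?ltry.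
Qed.

Section HausdorffZero.
Hypothesis H0 : H = 0%E.

Let H_lt r : 0 < r -> (H < r%:E)%E.
Proof. by rewrite H0 lte_fin. Qed.

Lemma tt_close0_right p : mcompact d2 -> exists q, tt_close 0 p q.
Proof.
move=> K2.
have lip q q' :
    (supdist S1 (travel_time d1 p) (travel_time d2 q \o phi) <=
     supdist S1 (travel_time d1 p) (travel_time d2 q' \o phi) + (d2 q q')%:E)%E.
  apply: le_trans (supdist_triangle _ _ (travel_time d2 q' \o phi) _) _.
  apply: leeD => //; rewrite supdist_tt_phi (metricC m2).
  exact: supdist_travel_time.
have small r : 0 < r -> exists q,
    (supdist S1 (travel_time d1 p) (travel_time d2 q \o phi) < r%:E)%E.
  move=> /H_lt /hausdorff_lt[Hp _].
  by have [|_ [q _ <-] lt] := Hp (travel_time d1 p); [exists p | exists q].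
have [q q0] := mcompact_lipschitz_zeroE K2 (supdist_tt_fin_num p) lip small
  (fun q => supdist_ge0 _ _ _).
by exists q; rewrite /tt_close q0.
Qed.

Lemma tt_close0_left q : mcompact d1 -> exists p, tt_close 0 p q.
Proof.
move=> K1.
have lip p p' :
    (supdist S1 (travel_time d1 p) (travel_time d2 q \o phi) <=
     supdist S1 (travel_time d1 p') (travel_time d2 q \o phi) + (d1 p p')%:E)%E.
  apply: le_trans (supdist_triangle _ _ (travel_time d1 p') _) _.
  by rewrite addeC; apply: leeD => //; exact: supdist_travel_time.
have small r : 0 < r -> exists p,
    (supdist S1 (travel_time d1 p) (travel_time d2 q \o phi) < r%:E)%E.
  move=> /H_lt /hausdorff_lt[_ Hq].
  by have [|_ [p _ <-] lt] := Hq (travel_time d2 q \o phi); [exists q | exists p].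
have [p p0] := mcompact_lipschitz_zeroE K1 (supdist_tt_fin_num ^~ q) lip small
  (fun p => supdist_ge0 _ _ _).
by exists p; rewrite /tt_close p0.
Qed.

Lemma isometric_of_tt_hausdorff0 : mcompact d1 -> mcompact d2 -> isometric d1 d2.
Proof.
move=> K1 K2.
have corr : correspondence (tt_close 0).
  by split=> [p|q]; [exact: tt_close0_right | exact: tt_close0_left].
have [n [nD _]] := exists_nat_mul_ge (ltW D0) (divr_gt0 eps0 (ltr0Sn _ 1)).
have := tt_close_distortion (lexx 0) _ nD corr; rewrite !mulr0 => dis0.
by apply: (isometric_of_distortion0 m1 m2 corr); apply: dis0.
Qed.

End HausdorffZero.

Lemma distortion_le_D (C : X1 -> X2 -> Prop) : distortion_le d1 d2 C D.
Proof.
move=> p q p' q' _ _; rewrite ler_norml.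
have := D1 p p'; have := D2 q q'; have := metric_ge0 m1 p p'.
by have := metric_ge0 m2 q q'; move=> *; apply/andP; split; lra.
Qed.

Lemma GH_dist_le_tt_close h : 0 <= h -> 4 * h < eps ->
  correspondence (tt_close h) ->
  (GH_dist d1 d2 <= ((2 * D / eps + 1) * h)%:E)%E.
Proof.
move=> h0 h4 corr.
have [n [nD nle]] := exists_nat_mul_ge (ltW D0) (divr_gt0 eps0 (ltr0Sn _ 1)).
apply: le_trans (GH_dist_le_distortion m1 m2 corr _
                   (tt_close_distortion h0 h4 nD corr)) _.
  by rewrite mulr_ge0 ?ler0n //; lra.
have -> : n%:R * (2 * h) / 2 = n%:R * h by field.
rewrite lee_fin; apply: ler_wpM2r => //.
by rewrite invf_div mulrA [D * 2]mulrC in nle.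
Qed.

Lemma GH_dist_le_tt_hausdorff : [set: X1] !=set0 ->
  (GH_dist d1 d2 <= (2 * D / eps + 1)%:E * H)%E.
Proof.
move=> [x1 _]; set c := 2 * D / eps + 1.
have c1_ge0 : 0 <= c - 1 by rewrite /c addrK divr_ge0 ?mulr_ge0 ?ltW.
have H0 : (0 <= H)%E.
  apply: hausdorff_ge0 => [a b|]; first exact: supdist_ge0.
  by exists (travel_time d1 x1), x1.
apply: le_mule_of_gt => [|//|h Hh]; first lra.
have h0 : 0 < h by rewrite -lte_fin (le_lt_trans H0).
have corr := tt_close_corr_of_hausdorff_lt Hh.
have [ch_ge|ch_lt] := leP (D / 2) (c * h).
  apply: le_trans (GH_dist_le_distortion m1 m2 corr (ltW D0)
                     (@distortion_le_D (tt_close h))) _.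
  by rewrite lee_fin.
apply: GH_dist_le_tt_close (ltW h0) _ corr.
have ce : (c - 1) * eps = 2 * D by rewrite /c addrK mulfVK ?gt_eqF.
rewrite ltNge; apply/negP => h4.
have : (c - 1) * eps <= (c - 1) * (4 * h) by rewrite ler_wpM2l.
lra.
Qed.

End TravelTimeCorrespondence.

Theorem mainTheorem1 (R : realType) (eps D : R)
  (X1 : Type) (d1 : X1 -> X1 -> R) (S1 : set X1)
  (X2 : Type) (d2 : X2 -> X2 -> R) (S2 : set X2) :
  0 < eps -> 0 < D ->
  [set: X1] !=set0 -> [set: X2] !=set0 ->
  length_space d1 -> mcompact d1 -> mclosed d1 S1 ->
  length_space d2 -> mcompact d2 -> mclosed d2 S2 ->
  (diam d1 < D%:E)%E -> (diam d2 < D%:E)%E ->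
  BLIE d1 S1 eps -> BLIE d2 S2 eps ->
  (forall phi : X1 -> X2, homeo_on d1 d2 S1 S2 phi ->
     (GH_dist d1 d2 <=
        ((2 * D / eps + 1)%:E *
         hausdorff (supdist S1) (travel_time_data d1)
                   (travel_time_data_phi d2 phi))%E)%E) /\
  ((exists phi : X1 -> X2, homeo_on d1 d2 S1 S2 phi /\
      hausdorff (supdist S1) (travel_time_data d1)
                (travel_time_data_phi d2 phi) = 0%E) ->
   isometric d1 d2).
Proof.
move=> eps0 D0 X1ne _ L1 K1 _ L2 K2 _ diam1 diam2 B1 B2.
have D1 := lt_diam diam1; have D2 := lt_diam diam2.
split=> [phi /homeo_on_image phiS | [phi [/homeo_on_image phiS H0]]].
- exact: (GH_dist_le_tt_hausdorff L1 L2 D1 D2 B1 B2 eps0 D0 phiS X1ne).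
- exact: (isometric_of_tt_hausdorff0 L1 L2 D1 D2 B1 B2 eps0 D0 phiS H0 K1 K2).
Qed.
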